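(* Let $L\subseteq B_i$ be an SINR-feasible set of links in a bucket $B_i$, let $e\in B_i$, and let $L^\ell=\{e'\in L: d_{e'}\le d_{e'e}\}$. Then there exists a set $G$ of at most six receivers of links in $L^\ell$ such that for every $e'\in L^\ell$ there is $g\in G$ with $d_{e'g}\le 2d_{e'e}$.
   Context: Nodes lie in the Euclidean plane. A link is $e=(s_e,r_e,P_e)$ with transmitter $s_e$, receiver $r_e$ and power $P_e>0$; $\mathcal{L}$ is the set of links. $d_e=d(s_e,r_e)$, $d_{e'e}=d(s_{e'},r_e)$, and for a point $g$, $d_{e'g}=d(s_{e'},g)$. With constants $\alpha\ge0,N>0,\beta>0$: $S_e=P_e/d_e^\alpha$, $S_{e'e}=P_{e'}/d_{e'e}^\alpha$; $L$ is SINR-feasible if $S_e/(N+\sum_{e'\in L\setminus\{e\}}S_{e'e})\ge\beta$ for all $e\in L$. Buckets: $S_{\min}=\min_{e\in\mathcal{L}}S_e$, $B_i=\{e\in\mathcal{L}:2^iS_{\min}\le S_e<2^{i+1}S_{\min}\}$. *)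

From HB Require Import structures.
From mathcomp Require Import all_boot all_order all_algebra.
From mathcomp Require Import reals exp.
Set Implicit Arguments. Unset Strict Implicit. Unset Printing Implicit Defensive.
Import Order.TTheory GRing.Theory Num.Theory.
Local Open Scope ring_scope.

Section SINR.
Variable R : realType.

Definition dist (p q : R * R) : R :=
  Num.sqrt ((p.1 - q.1) ^+ 2 + (p.2 - q.2) ^+ 2).

(* The link set \mathcal{L} is indexed by a finite type I:
   link e has transmitter s e, receiver r e and power P e. *)
Variables (I : finType) (s r : I -> R * R) (P : I -> R) (alpha N beta : R).

Definition d_len (e : I) : R := dist (s e) (r e).
Definition d_to (e' e : I) : R := dist (s e') (r e).
Definition sig (e : I) : R := P e / powR (d_len e) alpha.
Definition sig_to (e' e : I) : R := P e' / powR (d_to e' e) alpha.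

Definition sinr_feasible (L : {set I}) : Prop :=
  forall e, e \in L ->
    sig e / (N + \sum_(e' in L :\ e) sig_to e' e) >= beta.

(* S_min = min over all links; computed as a fold seeded with the value
   of some link e0 (the result does not depend on e0). *)
Definition Smin (e0 : I) : R := \big[Num.min/sig e0]_(j : I) sig j.

Definition in_bucket (i : nat) (e : I) : Prop :=
  2 ^+ i * Smin e <= sig e /\ sig e < 2 ^+ i.+1 * Smin e.

End SINR.

(** Split the plane around the receiver [r e] into six closed 60-degree
    sectors and, in every sector, keep the link of [L^l] whose transmitter is
    nearest to [r e].  Two vectors [u], [v] of a common 60-degree sector with
    [|u| <= |v|] satisfy [|u - v| <= |v|], so if [g] was kept for the sector of
    [s e'] then
      [d(s e', r g) <= d(s e', s g) + d_g <= d_{e'e} + d_{ge} <= 2 d_{e'e}]. *)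
From HB Require Import structures.
From mathcomp Require Import all_boot all_order all_algebra.
From mathcomp Require Import reals exp.
From mathcomp Require Import ring lra.
Import Order.TTheory GRing.Theory Num.Theory.
Local Open Scope ring_scope.

Lemma classwise_minima {T K : finType} {d : Order.disp_t} {O : orderType d}
    (cls : T -> K) (F : T -> O) (S : {set T}) :
  exists G : {set T},
    [/\ G \subset S, (#|G| <= #|K|)%N
      & forall x, x \in S -> exists2 g, g \in G & cls g = cls x /\ (F g <= F x)%O].
Proof.
pose least k :=
  [pick g in S | (cls g == k) && [forall h in S, (cls h == k) ==> (F g <= F h)%O]].
have leastP k g : least k = Some g ->
    [/\ g \in S, cls g = k & forall h, h \in S -> cls h = k -> (F g <= F h)%O].
  rewrite /least; case: pickP => // g' /andP[g'S /andP[/eqP g'k /forall_inP g'min]] [<-].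
  by split=> // h hS hk; apply: implyP (g'min h hS) _; apply/eqP.
exists [set g | least (cls g) == Some g]; split.
- by apply/subsetP => g; rewrite inE => /eqP /leastP[].
- rewrite -(@card_in_imset _ _ cls) ?max_card // => g g'.
  rewrite !inE => /eqP g_least /eqP g'_least gg'.
  by apply: Some_inj; rewrite -g_least -g'_least gg'.
move=> x xS; case E: (least (cls x)) => [g|].
  have [gS gx gmin] := leastP _ _ E.
  by exists g; [rewrite inE gx E | split=> //; apply: gmin].
move: E; rewrite /least; case: pickP => // none _.
case: (@arg_minP _ _ _ x [pred y in S | cls y == cls x] F); first by rewrite /= xS eqxx.
move=> g /andP[gS /eqP gx] gmin.
move: (none g); rewrite /= gS gx eqxx /= => /negbT/negP[].
by apply/forall_inP => h hS; apply/implyP => hx; apply: gmin; rewrite /= hS.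
Qed.

Section PlaneVectors.
Context {R : comNzRingType}.
Implicit Types (u v w : R * R).

Definition dotp u v := u.1 * v.1 + u.2 * v.2.
Definition crossp u v := u.1 * v.2 - u.2 * v.1.
Definition sqnorm u := dotp u u.

Lemma sqnormN u : sqnorm (- u) = sqnorm u.
Proof. by rewrite /sqnorm /dotp /=; ring. Qed.

Lemma sqnormD u v : sqnorm (u + v) = sqnorm u + 2 * dotp u v + sqnorm v.
Proof. by rewrite /sqnorm /dotp /=; ring. Qed.

Lemma sqnormB u v : sqnorm (u - v) = sqnorm u - 2 * dotp u v + sqnorm v.
Proof. by rewrite /sqnorm /dotp /=; ring. Qed.

Lemma sqnorm_dotp_crossp u v :
  sqnorm u * sqnorm v = dotp u v ^+ 2 + crossp u v ^+ 2.
Proof. by rewrite /sqnorm /dotp /crossp; ring. Qed.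

Lemma crosspC u v : crossp u v = - crossp v u.
Proof. by rewrite /crossp; ring. Qed.

Lemma crosspNl u v : crossp (- u) v = - crossp u v.
Proof. by rewrite /crossp /=; ring. Qed.

(* Cramer's rule [crossp w w' * u = crossp u w' * w + crossp w u * w'],
   paired with the same decomposition of [v]. *)
Lemma crossp_sq_dotp w w' u v :
  crossp w w' ^+ 2 * dotp u v =
    crossp u w' * crossp v w' * sqnorm w
    + (crossp u w' * crossp w v + crossp w u * crossp v w') * dotp w w'
    + crossp w u * crossp w v * sqnorm w'.
Proof. by rewrite /sqnorm /dotp /crossp; ring. Qed.

End PlaneVectors.

Section SixtyDegreeCone.
Context {R : realFieldType}.
Implicit Types (u v : R * R) (a b c d : R).

Lemma sqnorm_ge0 u : 0 <= sqnorm u.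
Proof. by rewrite /sqnorm /dotp -!expr2 addr_ge0 ?sqr_ge0. Qed.

Lemma cone_coords_ineq a b c d : 0 <= a -> 0 <= b -> 0 <= c -> 0 <= d ->
  (a ^+ 2 + a * b + b ^+ 2) * (c ^+ 2 + c * d + d ^+ 2)
    <= (2 * a * c + a * d + b * c + 2 * b * d) ^+ 2.
Proof.
move=> a0 b0 c0 d0.
have -> : (2 * a * c + a * d + b * c + 2 * b * d) ^+ 2
  = (a ^+ 2 + a * b + b ^+ 2) * (c ^+ 2 + c * d + d ^+ 2)
    + 3 * (a * c * (a * c + a * d + b * c) + b * d * (b * d + a * d + b * c)
           + 3 * (a * b) * (c * d)) by ring.
rewrite lerDl; apply: mulr_ge0 => //.
by rewrite !addr_ge0 ?mulr_ge0 ?addr_ge0 ?mulr_ge0.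
Qed.

(* The hypotheses say that [w'] is [w] rotated counterclockwise by 60 degrees. *)
Variables w w' : R * R.
Hypothesis sqnorm_w' : sqnorm w' = sqnorm w.
Hypothesis dotp_ww' : 2 * dotp w w' = sqnorm w.
Hypothesis crossp_ww'_gt0 : 0 < crossp w w'.

Definition in_cone u := (0 <= crossp w u) && (0 <= crossp u w').

Lemma cone_dotp_bound u v : in_cone u -> in_cone v ->
  0 <= dotp u v /\ sqnorm u * sqnorm v <= 4 * dotp u v ^+ 2.
Proof.
move=> /andP[b0 a0] /andP[d0 c0].
set k := crossp w w'; set t := dotp w w'.
have t0 : 0 <= t by rewrite -(pmulr_rge0 _ (ltr0n _ 2)) dotp_ww' sqnorm_ge0.
have k2 : 0 < k ^+ 2 by rewrite exprn_gt0.
have Euv := crossp_sq_dotp w w' u v.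
have Eu := crossp_sq_dotp w w' u u; have Ev := crossp_sq_dotp w w' v v.
rewrite sqnorm_w' -dotp_ww' -/k -/t in Euv Eu Ev.
set a := crossp u w' in Euv Eu a0; set b := crossp w u in Euv Eu b0.
set c := crossp v w' in Euv Ev c0; set d := crossp w v in Euv Ev d0.
have Duv : k ^+ 2 * dotp u v = t * (2 * a * c + a * d + b * c + 2 * b * d).
  by rewrite Euv; ring.
split.
  by rewrite -(pmulr_rge0 _ k2) Duv mulr_ge0 // !addr_ge0 ?mulr_ge0.
have key := ler_wpM2l (sqr_ge0 (2 * t))
  (@cone_coords_ineq a b c d a0 b0 c0 d0).
rewrite -(ler_pM2l (mulr_gt0 k2 k2)).
have -> : k ^+ 2 * k ^+ 2 * (sqnorm u * sqnorm v)
  = (k ^+ 2 * sqnorm u) * (k ^+ 2 * sqnorm v) by ring.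
have -> : k ^+ 2 * k ^+ 2 * (4 * dotp u v ^+ 2) = 4 * (k ^+ 2 * dotp u v) ^+ 2.
  by ring.
by rewrite /sqnorm Eu Ev Duv; lra.
Qed.

Lemma cone_sqnormB u v : in_cone u -> in_cone v -> sqnorm u <= sqnorm v ->
  sqnorm (u - v) <= sqnorm v.
Proof.
move=> uC vC le_uv; have [D0 DUV] := @cone_dotp_bound u v uC vC.
have U0 := sqnorm_ge0 u.
have : sqnorm u <= 2 * dotp u v by nra.
by rewrite sqnormB; lra.
Qed.

End SixtyDegreeCone.

Lemma antiperiodic_sign_change {R : realDomainType} (f : nat -> R) :
    (forall k, f (k + 3)%N = - f k) ->
  exists2 k, (k < 6)%N & 0 <= f k /\ f k.+1 <= 0.
Proof.
move=> fN; have f3 : f 3 = - f 0 := fN 0%N; have f4 : f 4 = - f 1 := fN 1%N.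
have f5 : f 5 = - f 2 := fN 2%N; have f6 : f 6 = - f 3 := fN 3%N.
have [f0_ge0 | f0_lt0] := lerP 0 (f 0).
  have [f1_le0 | f1_gt0] := lerP (f 1) 0; first by exists 0%N.
  have [f2_le0 | f2_gt0] := lerP (f 2) 0; first by exists 1%N; split; lra.
  by exists 2%N; split; lra.
have [f4_le0 | f4_gt0] := lerP (f 4) 0; first by exists 3%N; split; lra.
have [f5_le0 | f5_gt0] := lerP (f 5) 0; first by exists 4%N; split; lra.
by exists 5%N; split; lra.
Qed.

Section EuclideanNorm.
Context {R : rcfType}.
Implicit Types u v : R * R.

Lemma dotp_le_sqrt u v : dotp u v <= Num.sqrt (sqnorm u) * Num.sqrt (sqnorm v).
Proof.
rewrite -sqrtrM ?sqnorm_ge0 // sqnorm_dotp_crossp.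
apply: le_trans (ler_norm _) _.
by rewrite -sqrtr_sqr ler_sqrt ?lerDl ?addr_ge0 ?sqr_ge0.
Qed.

Lemma sqrt_sqnormD u v :
  Num.sqrt (sqnorm (u + v)) <= Num.sqrt (sqnorm u) + Num.sqrt (sqnorm v).
Proof.
have sum_ge0 : 0 <= Num.sqrt (sqnorm u) + Num.sqrt (sqnorm v).
  by rewrite addr_ge0 ?sqrtr_ge0.
rewrite -(ger0_norm sum_ge0) -sqrtr_sqr ler_sqrt ?sqr_ge0 //.
rewrite sqrrD !sqr_sqrtr ?sqnorm_ge0 // sqnormD mulr2n.
have := dotp_le_sqrt u v; lra.
Qed.

End EuclideanNorm.

Section HexagonalSectors.
Context {R : rcfType}.
Implicit Types u v : R * R.

Definition rot60 u : R * R :=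
  ((u.1 - Num.sqrt 3 * u.2) / 2, (Num.sqrt 3 * u.1 + u.2) / 2).

Lemma sqrt3_mul : Num.sqrt (3 : R) * Num.sqrt 3 = 3.
Proof. by rewrite -expr2 sqr_sqrtr // ler0n. Qed.

Lemma sqnorm_rot60 u : sqnorm (rot60 u) = sqnorm u.
Proof.
rewrite /sqnorm /dotp /rot60 /=; have := sqrt3_mul.
by set s := Num.sqrt 3 => s_mul; field: s_mul.
Qed.

Lemma dotp_rot60 u : 2 * dotp u (rot60 u) = sqnorm u.
Proof. by rewrite /sqnorm /dotp /rot60 /=; field. Qed.

Lemma crossp_rot60 u : crossp u (rot60 u) = Num.sqrt 3 / 2 * sqnorm u.
Proof. by rewrite /sqnorm /dotp /crossp /rot60 /=; field. Qed.

Lemma rot60_halfturn u : rot60 (rot60 (rot60 u)) = - u.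
Proof.
case: u => x y; rewrite /rot60 /=; have := sqrt3_mul.
by set s := Num.sqrt 3 => s_mul; congr pair; rewrite /=; field: s_mul.
Qed.

Definition hex_ray k : R * R := iter k rot60 (1, 0).

Lemma sqnorm_hex_ray k : sqnorm (hex_ray k) = 1.
Proof.
elim: k => [|k IHk]; first by rewrite /sqnorm /dotp /= mulr1 mul0r addr0.
by rewrite /hex_ray iterS sqnorm_rot60.
Qed.

Lemma hex_rayD3 k : hex_ray (k + 3) = - hex_ray k.
Proof. by rewrite /hex_ray addnC iterD; apply: rot60_halfturn. Qed.

Definition in_sector k u := in_cone (hex_ray k) (hex_ray k.+1) u.

Lemma in_sector_sqnormB k u v : in_sector k u -> in_sector k v ->
  sqnorm u <= sqnorm v -> sqnorm (u - v) <= sqnorm v.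
Proof.
apply: cone_sqnormB; first by rewrite !sqnorm_hex_ray.
  exact: dotp_rot60.
rewrite crossp_rot60 sqnorm_hex_ray mulr1 divr_gt0 //.
by rewrite sqrtr_gt0 ltr0n.
Qed.

Lemma sector_cover u : exists k : 'I_6, in_sector k u.
Proof.
have [|k k_lt6 [cross_ge0 cross_le0]] :=
  @antiperiodic_sign_change _ (fun k => crossp (hex_ray k) u).
  by move=> k; rewrite /= hex_rayD3 crosspNl.
by exists (Ordinal k_lt6); rewrite /in_sector /in_cone cross_ge0 crosspC oppr_ge0.
Qed.

Definition sector u : 'I_6 := odflt ord0 [pick k : 'I_6 | in_sector k u].

Lemma sectorP u : in_sector (sector u) u.
Proof.
rewrite /sector; case: pickP => // none.
by have [k] := sector_cover u; rewrite none.
Qed.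

End HexagonalSectors.

Section Distance.
Context {R : realType}.
Implicit Types p q z : R * R.

Lemma distE p q : dist p q = Num.sqrt (sqnorm (p - q)).
Proof. by rewrite /dist /sqnorm /dotp !expr2. Qed.

Lemma ler_dist p q p' q' :
  (dist p q <= dist p' q') = (sqnorm (p - q) <= sqnorm (p' - q')).
Proof. by rewrite !distE ler_sqrt ?sqnorm_ge0. Qed.

Lemma dist_triangle p q z : dist p z <= dist p q + dist q z.
Proof.
rewrite !distE (_ : p - z = (p - q) + (q - z)) ?sqrt_sqnormD //.
by rewrite addrA subrK.
Qed.

End Distance.

Theorem lemma2 (R : realType) (I : finType) (s r : I -> R * R) (P : I -> R)
    (alpha N beta : R) (halpha : 0 <= alpha) (hN : 0 < N) (hbeta : 0 < beta)
    (hP : forall e, 0 < P e) (i : nat) (L : {set I})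
    (hLB : forall e', e' \in L -> in_bucket s r P alpha i e')
    (hfeas : sinr_feasible s r P alpha N beta L)
    (e : I) (he : in_bucket s r P alpha i e) :
  let Ll := [set e' in L | d_len s r e' <= d_to s r e' e] in
  exists G : {set I},
    [/\ G \subset Ll, (#|G| <= 6)%N
      & forall e', e' \in Ll ->
          exists2 g, g \in G & dist (s e') (r g) <= 2 * d_to s r e' e].
Proof.
move=> Ll; pose u x := s x - r e.
have [G [GLl Gcard Gmin]] :=
  classwise_minima (fun x => sector (u x)) (fun x => d_to s r x e) Ll.
exists G; split=> //; first by rewrite card_ord in Gcard.
move=> e' e'Ll; have [g gG [same_sector le_ge']] := Gmin e' e'Ll.
exists g => //.
have := subsetP GLl g gG; rewrite inE => /andP[_ le_g].
have near : dist (s e') (s g) <= d_to s r e' e.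
  have: sqnorm (u g) <= sqnorm (u e') by rewrite -ler_dist.
  rewrite /d_to ler_dist -/(u e') (_ : s e' - s g = - (u g - u e')) ?sqnormN.
    apply: (@in_sector_sqnormB _ (sector (u e'))); last exact: sectorP.
    by rewrite -same_sector; apply: sectorP.
  by rewrite opprB /u opprB subrKA.
have := dist_triangle (s e') (s g) (r g).
have := le_trans le_g le_ge'; rewrite /d_len /d_to in near *; lra.
Qed.
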